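(* Let $P_0$ be a poset such that for each natural number $n$ there exists a poset $P_n$ with $P_0\cong\mathrm{id}^n(P_n)$. Then $P_0$ has ascending chain condition.
   Context: For a poset $P$, an ideal of $P$ is an upward directed downset of $P$ (downset: $x\le y\in d\Rightarrow x\in d$; upward directed: every two elements have a common upper bound in the set). $\mathrm{id}(P)$ is the set of nonempty ideals of $P$ ordered by inclusion, and $\mathrm{id}^n$ denotes the $n$-fold iterate of this construction ($\mathrm{id}^0(P)=P$). *)

From Stdlib Require Import Arith FunctionalExtensionality PropExtensionality ProofIrrelevance.

Record Poset := {
  carrier :> Type;
  le : carrier -> carrier -> Prop;
  le_refl : forall x, le x x;
  le_trans : forall x y z, le x y -> le y z -> le x z;
  le_antisym : forall x y, le x y -> le y x -> x = y
}.

Arguments le {p} _ _.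

Definition is_ideal (P : Poset) (d : P -> Prop) : Prop :=
  (exists x, d x) /\
  (forall x y : P, le x y -> d y -> d x) /\
  (forall x y : P, d x -> d y -> exists z, d z /\ le x z /\ le y z).

Definition ideal_le (P : Poset) (d e : {d : P -> Prop | is_ideal P d}) : Prop :=
  forall x, proj1_sig d x -> proj1_sig e x.

Lemma ideal_le_antisym (P : Poset) (d e : {d : P -> Prop | is_ideal P d}) :
  ideal_le P d e -> ideal_le P e d -> d = e.
Proof.
  destruct d as [d Hd], e as [e He]; unfold ideal_le; simpl; intros H1 H2.
  assert (d = e) as ->.
  { apply functional_extensionality; intro x;
    apply propositional_extensionality; split; auto. }
  f_equal; apply proof_irrelevance.
Qed.

Definition idP (P : Poset) : Poset := {|
  carrier := {d : P -> Prop | is_ideal P d};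
  le := ideal_le P;
  le_refl := fun d x h => h;
  le_trans := fun d e f h1 h2 x h => h2 x (h1 x h);
  le_antisym := ideal_le_antisym P
|}.

Fixpoint id_iter (n : nat) (P : Poset) : Poset :=
  match n with
  | 0 => P
  | S m => idP (id_iter m P)
  end.

Definition order_iso (P Q : Poset) : Prop :=
  exists (f : P -> Q) (g : Q -> P),
    (forall x, g (f x) = x) /\ (forall y, f (g y) = y) /\
    (forall x y : P, le x y <-> le (f x) (f y)).

Definition ACC (P : Poset) : Prop :=
  forall a : nat -> P, (forall n, le (a n) (a (S n))) ->
    exists N, forall m, N <= m -> a m = a N.

(* If P is a copy of id(R), then P is directed complete and its compact elements
   form a copy of R, namely the principal ideals, of which every element is the
   directed supremum.  Hence, when P is a copy of id^n(P_n) for every n, each level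
   K_0 = P, K_(j+1) = compact elements of K_j is again a copy of id(id R).  Call x
   eventually noncompact if x lies outside some K_j.  The supremum of a chain
   without greatest element is not compact, so if ACC fails such elements exist and
   Zorn's lemma gives a maximal one, m.  If m is in K_l but not in K_(l+1), the
   supremum in K_(l+1) of the elements of K_(l+1) below m lies strictly above m and
   outside K_(l+2), contradicting maximality. *)

From Stdlib Require Import Classical Arith ProofIrrelevance.
From mathcomp Require boolp classical_sets.

Definition directed (P : Poset) (D : P -> Prop) : Prop :=
  (exists d, D d) /\
  (forall a b, D a -> D b -> exists c, D c /\ le a c /\ le b c).

Definition lub_in (P : Poset) (S D : P -> Prop) (z : P) : Prop :=
  S z /\ (forall d, D d -> le d z) /\
  (forall u, S u -> (forall d, D d -> le d u) -> le z u).

Definition directed_complete (P : Poset) (S : P -> Prop) : Prop :=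
  forall D, (forall d, D d -> S d) -> directed P D -> exists z, lub_in P S D z.

Definition compact_in (P : Poset) (S : P -> Prop) (x : P) : Prop :=
  S x /\ forall D z, (forall d, D d -> S d) -> directed P D -> lub_in P S D z ->
    le x z -> exists d, D d /\ le x d.

Fixpoint compact_iter (P : Poset) (j : nat) : P -> Prop :=
  match j with
  | 0 => fun _ => True
  | S j => compact_in P (compact_iter P j)
  end.

Definition iso_onto (P : Poset) (S : P -> Prop) (Q : Poset) (f : Q -> P) : Prop :=
  (forall a, S (f a)) /\ (forall x, S x -> exists a, f a = x) /\
  (forall a b, le a b <-> le (f a) (f b)).

Lemma lub_in_le (P : Poset) (S D : P -> Prop) (z u : P) :
  lub_in P S D z -> lub_in P S D u -> le z u.
Proof. intros [_ [_ Hz]] [Su [Hu _]]; exact (Hz u Su Hu). Qed.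

Lemma compact_lub_in_le_mem (P : Poset) (S D : P -> Prop) (z : P) :
  compact_in P S z -> (forall d, D d -> S d) -> directed P D -> lub_in P S D z ->
  exists d, D d /\ le z d.
Proof. intros [_ Hc] HDS HD Hz; exact (Hc D z HDS HD Hz (le_refl _ _)). Qed.

Lemma ideal_directed (R : Poset) (I : idP R) : directed R (proj1_sig I).
Proof. destruct (proj2_sig I) as [Hne [_ Hdir]]; split; assumption. Qed.

Lemma ideal_down (R : Poset) (I : idP R) (x y : R) :
  le x y -> proj1_sig I y -> proj1_sig I x.
Proof. destruct (proj2_sig I) as [_ [Hdown _]]; apply Hdown. Qed.

Lemma principal_is_ideal (R : Poset) (r : R) : is_ideal R (fun x => le x r).
Proof.
  split; [exists r; apply le_refl | split].
  - intros x y Hxy Hy; eapply le_trans; eauto.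
  - intros x y Hx Hy; exists r; repeat split; auto using le_refl.
Qed.

Definition principal (R : Poset) (r : R) : idP R :=
  exist (is_ideal R) (fun x => le x r) (principal_is_ideal R r).

Lemma principal_le_ideal (R : Poset) (r : R) (I : idP R) :
  le (principal R r) I <-> proj1_sig I r.
Proof.
  simpl; unfold ideal_le; simpl; split.
  - intro H; apply H, le_refl.
  - intros Hr x Hx; exact (ideal_down R I x r Hx Hr).
Qed.

Lemma principal_le (R : Poset) (r s : R) : le (principal R r) (principal R s) <-> le r s.
Proof. apply principal_le_ideal. Qed.

Lemma union_is_ideal (R : Poset) (F : idP R -> Prop) :
  directed (idP R) F -> is_ideal R (fun x => exists I, F I /\ proj1_sig I x).
Proof.
  intros [[I0 HI0] Hdir]; split; [|split].
  - destruct (ideal_directed R I0) as [[x Hx] _]; exists x, I0; auto.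
  - intros x y Hxy [I [HI Hy]]; exists I; eauto using ideal_down.
  - intros x y [I1 [HI1 Hx]] [I2 [HI2 Hy]].
    destruct (Hdir _ _ HI1 HI2) as [J [HJ [H1 H2]]].
    destruct (proj2 (ideal_directed R J) x y (H1 x Hx) (H2 y Hy)) as [z [Jz Hxz]].
    exists z; split; [exists J|]; auto.
Qed.

Section IdealRepresentation.

Variables (P R : Poset) (S : P -> Prop) (f : idP R -> P).
Hypothesis f_iso : iso_onto P S (idP R) f.

Lemma ideal_rep_directed_lub (D : P -> Prop) :
  (forall d, D d -> S d) -> directed P D ->
  exists Z : idP R, lub_in P S D (f Z) /\
    forall x, proj1_sig Z x <-> exists I, D (f I) /\ proj1_sig I x.
Proof.
  destruct f_iso as [HS [Hsurj Hle]]; intros HDS [[d0 Hd0] HDdir].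
  assert (HF : directed (idP R) (fun I => D (f I))).
  { split.
    - destruct (Hsurj d0 (HDS d0 Hd0)) as [I0 <-]; eauto.
    - intros I1 I2 H1 H2.
      destruct (HDdir _ _ H1 H2) as [c [Hc [H1c H2c]]].
      destruct (Hsurj c (HDS c Hc)) as [J <-].
      exists J; rewrite !Hle; auto. }
  exists (exist _ _ (union_is_ideal R _ HF)); split; [|reflexivity].
  split; [|split].
  - apply HS.
  - intros d Hd; destruct (Hsurj d (HDS d Hd)) as [I <-].
    apply Hle; intros x Hx; exists I; auto.
  - intros u Su Hub; destruct (Hsurj u Su) as [J <-].
    apply Hle; intros x [I [HI Hx]]; exact (proj2 (Hle I J) (Hub _ HI) x Hx).
Qed.

Lemma ideal_rep_directed_complete : directed_complete P S.
Proof.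
  intros D HDS HD; destruct (ideal_rep_directed_lub D HDS HD) as [Z [HZ _]]; eauto.
Qed.

Definition principals_below (I : idP R) (d : P) : Prop :=
  exists r, proj1_sig I r /\ d = f (principal R r).

Lemma principals_below_sub (I : idP R) (d : P) : principals_below I d -> S d.
Proof. intros [r [_ ->]]; apply (proj1 f_iso). Qed.

Lemma principals_below_directed (I : idP R) : directed P (principals_below I).
Proof.
  destruct f_iso as [_ [_ Hle]]; destruct (ideal_directed R I) as [[r Hr] Hdir].
  split; [exists (f (principal R r)), r; auto|].
  intros a b [r1 [H1 ->]] [r2 [H2 ->]].
  destruct (Hdir _ _ H1 H2) as [z [Hz [Hz1 Hz2]]].
  exists (f (principal R z)); split; [exists z; auto|].
  rewrite <- !Hle, !principal_le; auto.
Qed.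

Lemma principals_below_lub (I : idP R) : lub_in P S (principals_below I) (f I).
Proof.
  destruct f_iso as [HS [Hsurj Hle]]; split; [apply HS|split].
  - intros d [r [Hr ->]]; apply Hle, principal_le_ideal; auto.
  - intros u Su Hub; destruct (Hsurj u Su) as [J <-].
    apply Hle; intros r Hr.
    apply principal_le_ideal, Hle, Hub; exists r; auto.
Qed.

Lemma compact_ideal_rep : iso_onto P (compact_in P S) R (fun r => f (principal R r)).
Proof.
  pose proof f_iso as [HS [Hsurj Hle]]; split; [|split].
  - intro r; split; [apply HS|].
    intros D z HDS HD Hz Hrz.
    destruct (ideal_rep_directed_lub D HDS HD) as [Z [HZ HZunion]].
    assert (HrZ : le (f (principal R r)) (f Z))
      by (eapply le_trans; [exact Hrz | exact (lub_in_le P S D z _ Hz HZ)]).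
    apply Hle, principal_le_ideal, HZunion in HrZ.
    destruct HrZ as [I [HI Ir]].
    exists (f I); split; auto; apply Hle, principal_le_ideal; auto.
  - intros x Cx; destruct (Hsurj x (proj1 Cx)) as [I <-].
    destruct (compact_lub_in_le_mem P S _ (f I) Cx (principals_below_sub I)
                (principals_below_directed I) (principals_below_lub I))
      as [d [[r [Hr ->]] HIr]].
    exists r; f_equal; apply (le_antisym (idP R)).
    + apply principal_le_ideal; auto.
    + apply Hle; auto.
  - intros a b; rewrite <- Hle; symmetry; apply principal_le.
Qed.

End IdealRepresentation.

Definition chain (P : Poset) (A : P -> Prop) : Prop :=
  forall s t, A s -> A t -> le s t \/ le t s.

Lemma chain_directed (P : Poset) (A : P -> Prop) :
  (exists t, A t) -> chain P A -> directed P A.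
Proof.
  intros Hne Hch; split; [exact Hne|].
  intros a b Ha Hb; destruct (Hch a b Ha Hb); [exists b | exists a];
    repeat split; auto using le_refl.
Qed.

Lemma ascending_le (P : Poset) (a : nat -> P) :
  (forall n, le (a n) (a (S n))) -> forall i j, i <= j -> le (a i) (a j).
Proof.
  intros Ha i j Hij; induction Hij; [apply le_refl | eapply le_trans; eauto].
Qed.

Lemma sub_le_antisym (P : Poset) (B : P -> Prop) (x y : {x | B x}) :
  le (proj1_sig x) (proj1_sig y) -> le (proj1_sig y) (proj1_sig x) -> x = y.
Proof.
  destruct x as [x Bx], y as [y By]; simpl; intros Hxy Hyx.
  assert (x = y) as <- by (apply le_antisym; assumption).
  f_equal; apply proof_irrelevance.
Qed.

Definition subposet (P : Poset) (B : P -> Prop) : Poset := {|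
  carrier := {x : P | B x};
  le := fun x y => @le P (proj1_sig x) (proj1_sig y);
  le_refl := fun x => le_refl P (proj1_sig x);
  le_trans := fun x y z => le_trans P (proj1_sig x) (proj1_sig y) (proj1_sig z);
  le_antisym := sub_le_antisym P B
|}.

Lemma poset_zorn (P : Poset) :
  (forall A : P -> Prop, chain P A -> exists t, forall s, A s -> le s t) ->
  exists m : P, forall s, le m s -> s = m.
Proof.
  intros Hch.
  destruct (@classical_sets.Zorn P (fun x y : P => boolp.asbool (le x y))) as [m Hm].
  - intro t; apply boolp.asboolT, le_refl.
  - intros r s t H1 H2; apply boolp.asboolT;
      eapply le_trans; apply boolp.asboolW; eassumption.
  - intros s t H1 H2; apply le_antisym; apply boolp.asboolW; assumption.
  - intros A HA; destruct (Hch A) as [t Ht].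
    + intros s t Hs Ht; destruct (HA s t Hs Ht) as [H|H];
        apply boolp.asboolW in H; auto.
    + exists t; intros s Hs; apply boolp.asboolT; auto.
  - exists m; intros s Hs; apply Hm, boolp.asboolT, Hs.
Qed.

Lemma id_iter_add (a b : nat) (Q : Poset) : id_iter (a + b) Q = id_iter a (id_iter b Q).
Proof. induction a as [|a IH]; simpl; congruence. Qed.

Lemma compact_iter_iso_onto (P Q : Poset) (k m : nat) (f : id_iter k Q -> P) :
  iso_onto P (compact_iter P m) (id_iter k Q) f ->
  exists g, iso_onto P (compact_iter P (m + k)) Q g.
Proof.
  revert m f; induction k as [|k IH]; intros m f Hf.
  - rewrite Nat.add_0_r; eauto.
  - rewrite <- plus_n_Sm; exact (IH (S m) _ (compact_ideal_rep _ _ _ f Hf)).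
Qed.

Section IteratedIdeals.

Variable P : Poset.
Hypothesis P_iter_ideals : forall n : nat, exists Q : Poset, order_iso P (id_iter n Q).

Lemma compact_iter_ideals2 (j : nat) :
  exists R f, iso_onto P (compact_iter P j) (idP (idP R)) f.
Proof.
  destruct (P_iter_ideals (j + 2)) as [Q HQ].
  rewrite id_iter_add in HQ; destruct HQ as [f [g [Hgf [Hfg Hle]]]].
  assert (Hg : iso_onto P (compact_iter P 0) (id_iter j (idP (idP Q))) g).
  { split; [|split].
    - intros; exact I.
    - intros x _; exists (f x); apply Hgf.
    - intros a b; rewrite Hle, !Hfg; tauto. }
  destruct (compact_iter_iso_onto P _ j 0 g Hg) as [h Hh]; eauto.
Qed.

Lemma iter_ideals_directed_complete : directed_complete P (compact_iter P 0).
Proof.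
  destruct (compact_iter_ideals2 0) as [R [f Hf]].
  exact (ideal_rep_directed_complete _ _ _ f Hf).
Qed.

Definition eventually_noncompact (x : P) : Prop := exists j, ~ compact_iter P j x.

Lemma first_noncompact_level (x : P) :
  eventually_noncompact x -> exists l, compact_iter P l x /\ ~ compact_iter P (S l) x.
Proof.
  intros [j Hj]; induction j as [|j IH]; [contradiction Hj; exact I|].
  destruct (classic (compact_iter P j x)); eauto.
Qed.

Lemma eventually_noncompact_not_maximal (x : P) :
  eventually_noncompact x ->
  exists y, le x y /\ y <> x /\ eventually_noncompact y.
Proof.
  intros Hx; destruct (first_noncompact_level x Hx) as [l [Kx Knx]].
  destruct (compact_iter_ideals2 l) as [R [f Hf]].
  pose proof (compact_ideal_rep _ _ _ f Hf) as Hg.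
  destruct (proj1 (proj2 Hf) x Kx) as [I <-].
  set (D := principals_below P (idP R) f I).
  assert (HDK : forall d, D d -> compact_iter P (S l) d).
  { intros d [r [_ ->]]; apply (proj1 Hg). }
  pose proof (principals_below_directed _ _ _ f Hf I) as HD.
  pose proof (principals_below_lub _ _ _ f Hf I) as [_ [HfI_ub HfI_least]].
  destruct (ideal_rep_directed_complete _ _ _ _ Hg D HDK HD) as [y Hy].
  pose proof Hy as [Ky [Hy_ub _]].
  assert (Hxy : le (f I) y) by exact (HfI_least y (proj1 Ky) Hy_ub).
  exists y; split; [exact Hxy | split].
  - intros ->; contradiction.
  - exists (S (S l)); intro Cy.
    destruct (compact_lub_in_le_mem P _ D y Cy HDK HD Hy) as [d [Hd Hyd]].
    apply Knx; replace (f I) with y; [exact Ky|].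
    apply le_antisym; [eapply le_trans; eauto | exact Hxy].
Qed.

Lemma chain_lub_eventually_noncompact (A : P -> Prop) :
  chain P A -> (exists t, A t) -> ~ (exists t, A t /\ forall s, A s -> le s t) ->
  exists z, eventually_noncompact z /\ forall s, A s -> le s z.
Proof.
  intros Hch Hne Hnogreatest.
  pose proof (chain_directed P A Hne Hch) as HA.
  destruct (iter_ideals_directed_complete A (fun _ _ => I) HA) as [z Hz].
  exists z; split; [exists 1; intro Cz | apply Hz].
  destruct (compact_lub_in_le_mem P _ A z Cz (fun _ _ => I) HA Hz) as [d [Ad Hzd]].
  apply Hnogreatest; exists d; split; [exact Ad|].
  intros s As; eapply le_trans; [apply Hz, As | exact Hzd].
Qed.

Lemma not_ACC_eventually_noncompact : ~ ACC P -> exists z, eventually_noncompact z.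
Proof.
  intros HnACC; apply NNPP; intro Hnone; apply HnACC; intros a Ha.
  apply NNPP; intro Hunstable.
  pose proof (ascending_le P a Ha) as Hmono.
  destruct (chain_lub_eventually_noncompact (fun x => exists k, x = a k)) as [z [Hz _]].
  - intros x y [i ->] [k ->]; destruct (Nat.le_ge_cases i k); auto.
  - exists (a 0), 0; reflexivity.
  - intros [t [[k ->] Hk]]; apply Hunstable; exists k; intros m Hm.
    apply le_antisym; [apply Hk; exists m; reflexivity | apply Hmono, Hm].
  - apply Hnone; exists z; exact Hz.
Qed.

Lemma exists_maximal_eventually_noncompact :
  (exists z, eventually_noncompact z) ->
  exists m, eventually_noncompact m /\
    forall y, eventually_noncompact y -> le m y -> y = m.
Proof.
  intros [z0 Hz0].
  destruct (poset_zorn (subposet P eventually_noncompact)) as [[m Hm] Hmax].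
  - intros A HA.
    destruct (classic (exists t, A t /\ forall s, A s -> le s t)) as [[t [_ Ht]] | Hnogreatest];
      [eauto|].
    destruct (classic (exists t, A t)) as [[t0 At0] | Hempty].
    2: { exists (exist _ z0 Hz0); intros s As; contradict Hempty; eauto. }
    destruct (chain_lub_eventually_noncompact (fun x => exists h, A (exist _ x h)))
      as [z [Hz Hzub]].
    + intros x y [hx Ax] [hy Ay]; exact (HA _ _ Ax Ay).
    + exists (proj1_sig t0), (proj2_sig t0); destruct t0; exact At0.
    + intros [t [[ht At] Ht]]; apply Hnogreatest; exists (exist _ t ht); split; [exact At|].
      intros [s hs] As; apply Ht; eauto.
    + exists (exist _ z Hz); intros [s hs] As; apply Hzub; eauto.
  - exists m; split; [exact Hm|].
    intros y Hy Hmy; exact (f_equal (@proj1_sig _ _) (Hmax (exist _ y Hy) Hmy)).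
Qed.

End IteratedIdeals.

Theorem theorem4p2 (P0 : Poset) :
  (forall n : nat, exists Pn : Poset, order_iso P0 (id_iter n Pn)) ->
  ACC P0.
Proof.
  intros Hiter; apply NNPP; intro HnACC.
  destruct (exists_maximal_eventually_noncompact P0 Hiter
              (not_ACC_eventually_noncompact P0 Hiter HnACC)) as [m [Hm Hmax]].
  destruct (eventually_noncompact_not_maximal P0 Hiter m Hm) as [y [Hmy [Hym Hy]]].
  exact (Hym (Hmax y Hy Hmy)).
Qed.
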